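(* Let $((A,\cdot),N)$ be a Nijenhuis algebra, $((M,\triangleright,\triangleleft),N_M)$ a Nijenhuis bimodule, and $0\to((M,0),N_M)\xrightarrow{i}((E,\cdot_E),N_E)\xrightarrow{p}((A,\cdot),N)\to0$ an abelian extension inducing this bimodule structure. Then there is a group isomorphism $\mathrm{Aut}_{M,A}(E,N_E)\cong Z^1_{\mathrm{NAlg}}((A,N);(M,N_M))$. Consequently the group $\mathrm{Aut}_{M,A}(E,N_E)$ is abelian.
   Context: Over a field of characteristic $0$. Nijenhuis algebra: associative $(A,\cdot)$ with linear $N$, $N(a)N(b)=N(N(a)b+aN(b)-N(ab))$; Nijenhuis bimodule: $A$-bimodule with linear $N_M$, $N(a)\triangleright N_M(u)=N_M(N(a)\triangleright u+a\triangleright N_M(u)-N_M(a\triangleright u))$, $N_M(u)\triangleleft N(a)=N_M(N_M(u)\triangleleft a+u\triangleleft N(a)-N_M(u\triangleleft a))$. Abelian extension: Nijenhuis algebra $E$ with a short exact sequence of Nijenhuis algebra homomorphisms (algebra maps commuting with the operators) as displayed ($M$ with zero multiplication, identified with $i(M)$), such that for any linear section $s$ of $p$, $a\triangleright u=s(a)\cdot_Eu$ and $u\triangleleft a=u\cdot_Es(a)$. $\mathrm{Aut}_{M,A}(E,N_E)$ is the group (under composition) of Nijenhuis algebra automorphisms $\varphi$ of $E$ with $\varphi(M)\subseteq M$, $\varphi|_M=\mathrm{Id}_M$ and $p\varphi s=\mathrm{Id}_A$. $Z^1_{\mathrm{NAlg}}((A,N);(M,N_M))$ is the additive group of linear maps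 $d:A\to M$ with $d(a\cdot b)=a\triangleright d(b)+d(a)\triangleleft b$ for all $a,b$ and $N_M\circ d=d\circ N$ (the 1-cocycles of the Nijenhuis algebra cohomology). *)

(* Non-unital associative algebras over a field K are given
   as K-vector spaces (lmodType K) with an explicit bilinear associative
   multiplication. *)
From HB Require Import structures.
From mathcomp Require Import all_boot all_order all_algebra.
Set Implicit Arguments. Unset Strict Implicit. Unset Printing Implicit Defensive.
Import GRing.Theory.
Local Open Scope ring_scope.

Section Defs.
Variable K : fieldType.

Definition bilinear_op (U V W : lmodType K) (f : U -> V -> W) : Prop :=
  (forall u, linear (f u)) /\ (forall v, linear (f^~ v)).

Definition is_nijenhuis_algebra (A : lmodType K) (mul : A -> A -> A) (N : A -> A) : Prop :=
  (bilinear_op mul /\ associative mul /\ linear N /\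
      forall a b, mul (N a) (N b) = N (mul (N a) b + mul a (N b) - N (mul a b))).

Definition is_nijenhuis_bimodule (A M : lmodType K) (mul : A -> A -> A) (N : A -> A)
  (actl : A -> M -> M) (actr : M -> A -> M) (NM : M -> M) : Prop :=
  (bilinear_op actl /\ bilinear_op actr /\ linear NM /\
      (forall a b u, actl (mul a b) u = actl a (actl b u)) /\
      (forall a b u, actr (actr u a) b = actr u (mul a b)) /\
      (forall a b u, actr (actl a u) b = actl a (actr u b)) /\
      (forall a u, actl (N a) (NM u) =
                   NM (actl (N a) u + actl a (NM u) - NM (actl a u)))  /\
      (forall a u, actr (NM u) (N a) =
                   NM (actr (NM u) a + actr u (N a) - NM (actr u a)))).

Definition is_abelian_extension (A M E : lmodType K)
  (mul : A -> A -> A) (N : A -> A)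
  (actl : A -> M -> M) (actr : M -> A -> M) (NM : M -> M)
  (mulE : E -> E -> E) (NE : E -> E) (i : M -> E) (p : E -> A) : Prop :=
  (is_nijenhuis_algebra mulE NE /\
      linear i /\ linear p /\ injective i /\
      (forall a, exists x, p x = a) /\
      (forall x, p x = 0 <-> exists u, x = i u) /\
      (forall u v, mulE (i u) (i v) = i 0) /\
      (forall x y, p (mulE x y) = mul (p x) (p y)) /\
      (forall u, NE (i u) = i (NM u)) /\
      (forall x, p (NE x) = N (p x))  /\
      (* the induced bimodule structure, for any linear section s of p *)
      (forall s : A -> E, linear s -> (forall a, p (s a) = a) ->
         forall a u, i (actl a u) = mulE (s a) (i u) /\
                     i (actr u a) = mulE (i u) (s a))).

Definition in_AutMA (A M E : lmodType K) (mulE : E -> E -> E) (NE : E -> E)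
  (i : M -> E) (p : E -> A) (phi : E -> E) : Prop :=
  (linear phi /\ bijective phi /\
      (forall x y, phi (mulE x y) = mulE (phi x) (phi y)) /\
      (forall x, NE (phi x) = phi (NE x)) /\
      (forall u, exists v, phi (i u) = i v) /\
      (forall u, phi (i u) = i u)  /\
      (forall s : A -> E, linear s -> (forall a, p (s a) = a) ->
         forall a, p (phi (s a)) = a)).

Definition in_Z1 (A M : lmodType K) (mul : A -> A -> A) (N : A -> A)
  (actl : A -> M -> M) (actr : M -> A -> M) (NM : M -> M) (d : A -> M) : Prop :=
  (linear d /\
      (forall a b, d (mul a b) = actl a (d b) + actr (d a) b)  /\
      (forall a, NM (d a) = d (N a))).

End Defs.

(* Fix a linear section s of p; it exists by Zorn's lemma, applied to graphs
   of linear sections defined on subspaces of A.  Every phi in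
   Aut_{M,A}(E,N_E) fixes i(M) and satisfies p \o phi = p, so phi - id
   factors through p and lands in i(M): phi x = x + i (d_phi (p x)) with
   d_phi a = i^-1 (phi (s a) - s a).  Multiplicativity of phi and its
   commutation with N_E are then exactly the derivation identity and the
   identity N_M \o d_phi = d_phi \o N, the map d |-> id + i \o d \o p inverts
   phi |-> d_phi, and composing two such maps adds their d's; in particular
   they commute. *)

From HB Require Import structures.
From mathcomp Require Import all_boot all_order all_algebra.
From mathcomp Require Import boolp classical_sets.
Set Implicit Arguments. Unset Strict Implicit. Unset Printing Implicit Defensive.
Import GRing.Theory.
Local Open Scope ring_scope.

Section LinearSection.
Local Open Scope classical_set_scope.
Variables (K : fieldType) (A E : lmodType K) (p : E -> A).
Hypothesis p_linear : linear p.
#[local] HB.instance Definition _ := GRing.isLinear.Build K E A *:%R p p_linear.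

Definition partial_section (G : set (A * E)) :=
  [/\ forall c a x b y, G (a, x) -> G (b, y) -> G (c *: a + b, c *: x + y),
      forall a x y, G (a, x) -> G (a, y) -> x = y &
      forall a x, G (a, x) -> p x = a].

Lemma partial_section0 : partial_section [set (0, 0)].
Proof.
split=> [c a x b y [-> ->] [-> ->]|a x y [_ ->] [_ ->]|a x [-> ->]] //.
- by rewrite !scaler0 !addr0.
- exact: linear0.
Qed.

Lemma partial_section_bigcup (F : set (set (A * E))) :
  F `<=` partial_section -> total_on F subset ->
  partial_section (\bigcup_(G in F) G).
Proof.
move=> Fsec Ftot.
have common z1 z2 : (\bigcup_(G in F) G) z1 -> (\bigcup_(G in F) G) z2 ->
    exists2 G, F G & G z1 /\ G z2.
  case=> G1 FG1 G1z1 [G2 FG2 G2z2].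
  have [G12|G21] := Ftot _ _ FG1 FG2.
  - by exists G2 => //; split=> //; apply: G12.
  - by exists G1 => //; split=> //; apply: G21.
split.
- move=> c a x b y h1 h2; have [G FG [Gax Gby]] := common _ _ h1 h2.
  by exists G => //; have [Gclosed _ _] := Fsec _ FG; apply: Gclosed.
- move=> a x y h1 h2; have [G FG [Gax Gay]] := common _ _ h1 h2.
  by have [_ Gfun _] := Fsec _ FG; apply: Gfun Gax Gay.
- by move=> a x [G FG Gax]; have [_ _ Gp] := Fsec _ FG; apply: Gp Gax.
Qed.

Section Extension.
Variables (G : set (A * E)) (a0 : A) (e0 : E).
Hypotheses (Gsec : partial_section G) (G0 : G (0, 0)) (pe0 : p e0 = a0).
Hypothesis a0_notin : forall x, ~ G (a0, x).

Definition extend_section : set (A * E) :=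
  [set z | exists c b y, G (b, y) /\ z = (b + c *: a0, y + c *: e0)].

Lemma extend_section_proper : G `<` extend_section.
Proof.
split; first by move=> -[b y] Gby; exists 0, b, y; rewrite !scale0r !addr0.
move=> sub; apply: (a0_notin (x := e0)); apply: sub.
by exists 1, 0, 0; rewrite !add0r !scale1r.
Qed.

Lemma partial_section_extend : partial_section extend_section.
Proof.
have [Gclosed Gfun Gp] := Gsec.
split.
- move=> c _ _ _ _ [c1 [b1 [y1 [h1 [-> ->]]]]] [c2 [b2 [y2 [h2 [-> ->]]]]].
  exists (c * c1 + c2), (c *: b1 + b2), (c *: y1 + y2); split; first exact: Gclosed.
  by rewrite !scalerDr !scalerDl !scalerA; congr (_, _); apply: addrACA.
- move=> _ _ _ [c1 [b1 [y1 [h1 [-> ->]]]]] [c2 [b2 [y2 [h2 [eb ->]]]]].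
  case: (eqVneq c1 c2) eb => [<- /addIr eb|nec eb].
    by move: h2; rewrite -eb => /(Gfun _ _ _ h1) ->.
  exfalso; apply: (a0_notin (x := (c1 - c2)^-1 *: (y2 - y1))).
  have -> : a0 = (c1 - c2)^-1 *: (b2 - b1).
    rewrite -[b2](addrK (c2 *: a0)) -eb addrAC [b1 + _]addrC addrK.
    by rewrite -scalerBl scalerA mulVf ?scale1r // subr_eq0.
  have := Gclosed ((c1 - c2)^-1) _ _ _ _ (Gclosed (-1) _ _ _ _ h1 h2) G0.
  by rewrite !scaleN1r !addr0 ![- _ + _]addrC.
- by move=> _ _ [c [b [y [h [-> ->]]]]]; rewrite linearD linearZ /= pe0 (Gp _ _ h).
Qed.

End Extension.

Hypothesis p_surj : forall a, exists x, p x = a.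

Lemma linear_section_exists : exists s : A -> E, linear s /\ cancel s p.
Proof.
have [G [Gsec Gmax]] := Zorn_bigcup partial_section_bigcup.
have [Gclosed Gfun Gp] := Gsec.
(* The empty graph is a partial section too, so G (0, 0) needs maximality. *)
have G0 : G (0, 0).
  apply: contrapT => nG0; apply: (Gmax _ _ partial_section0); split.
    move=> [a x] Gax; have := Gclosed (-1) _ _ _ _ Gax Gax.
    by rewrite !scaleN1r !addNr.
  by move/(_ (0, 0) erefl).
have Gtotal a : exists x, G (a, x).
  apply: contrapT => /forallNP a_notin; have [e pe] := p_surj a.
  apply: (Gmax _ (extend_section_proper e G0 a_notin)).
  exact: partial_section_extend Gsec G0 pe a_notin.
pose s a := xget 0 [set x | G (a, x)].
have Gs a : G (a, s a) := xgetPex 0 (Gtotal a).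
exists s; split=> [c a b|a]; last exact: Gp.
exact: Gfun (Gs _) (Gclosed _ _ _ _ _ (Gs a) (Gs b)).
Qed.

End LinearSection.

Section AbelianExtension.
Variables (K : fieldType) (A M E : lmodType K).
Variables (mul : A -> A -> A) (N : A -> A).
Variables (actl : A -> M -> M) (actr : M -> A -> M) (NM : M -> M).
Variables (mulE : E -> E -> E) (NE : E -> E) (i : M -> E) (p : E -> A).
Hypothesis ext : is_abelian_extension mul N actl actr NM mulE NE i p.
Variable s : A -> E.
Hypotheses (s_linear : linear s) (sK : cancel s p).

Local Notation Aut := (in_AutMA mulE NE i p).
Local Notation Z1 := (in_Z1 mul N actl actr NM).

Let mulE_bilinear : bilinear_op mulE. Proof. by case: ext => [[]]. Qed.
Let NE_linear : linear NE. Proof. by case: ext => [[_ [_ []]]]. Qed.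
Let i_linear : linear i. Proof. by case: ext => _ []. Qed.
Let p_linear : linear p. Proof. by case: ext => _ [_ []]. Qed.
Let i_inj : injective i. Proof. by case: ext => _ [_ [_ []]]. Qed.
Let ker_p x : p x = 0 <-> exists u, x = i u.
Proof. by case: ext => _ [_ [_ [_ [_ []]]]]. Qed.
Let mulE_ii u v : mulE (i u) (i v) = i 0.
Proof. by case: ext => _ [_ [_ [_ [_ [_ []]]]]]. Qed.
Let p_mul x y : p (mulE x y) = mul (p x) (p y).
Proof. by case: ext => _ [_ [_ [_ [_ [_ [_ []]]]]]]. Qed.
Let NE_i u : NE (i u) = i (NM u).
Proof. by case: ext => _ [_ [_ [_ [_ [_ [_ [_ []]]]]]]]. Qed.
Let p_NE x : p (NE x) = N (p x).
Proof. by case: ext => _ [_ [_ [_ [_ [_ [_ [_ [_ []]]]]]]]]. Qed.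
Let act_s a u :
  i (actl a u) = mulE (s a) (i u) /\ i (actr u a) = mulE (i u) (s a).
Proof. by case: ext => _ [_ [_ [_ [_ [_ [_ [_ [_ [_ /(_ s s_linear sK)]]]]]]]]]. Qed.
Let actl_s a u : i (actl a u) = mulE (s a) (i u). Proof. by case: (act_s a u). Qed.
Let actr_s a u : i (actr u a) = mulE (i u) (s a). Proof. by case: (act_s a u). Qed.

#[local] HB.instance Definition _ := bilinear_isBilinear.Build K E E E *:%R *:%R mulE
  (mulE_bilinear.2, mulE_bilinear.1).
#[local] HB.instance Definition _ := GRing.isLinear.Build K E E *:%R NE NE_linear.
#[local] HB.instance Definition _ := GRing.isLinear.Build K M E *:%R i i_linear.
#[local] HB.instance Definition _ := GRing.isLinear.Build K E A *:%R p p_linear.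
#[local] HB.instance Definition _ := GRing.isLinear.Build K A E *:%R s s_linear.

Lemma p_i u : p (i u) = 0.
Proof. by apply/ker_p; exists u. Qed.

Lemma ker_sub_section x : p (x - s (p x)) = 0.
Proof. by rewrite linearB /= sK subrr. Qed.

Definition i_inv (x : E) : M := xget 0 [set u | i u = x].

Lemma i_inv_i u : i_inv (i u) = u.
Proof. by apply: xget_unique => // v /i_inj. Qed.

Lemma i_invK x : p x = 0 -> i (i_inv x) = x.
Proof. by case/ker_p => u ->; rewrite i_inv_i. Qed.

Lemma split_ext x : x = i (i_inv (x - s (p x))) + s (p x).
Proof. by rewrite i_invK ?ker_sub_section ?subrK. Qed.

Lemma mulE_actl x u : mulE x (i u) = i (actl (p x) u).
Proof. by rewrite {1}(split_ext x) linearDl /= mulE_ii linear0 add0r actl_s. Qed.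

Lemma mulE_actr x u : mulE (i u) x = i (actr u (p x)).
Proof. by rewrite {1}(split_ext x) linearDr /= mulE_ii linear0 add0r actr_s. Qed.

Definition aut_cocycle (phi : E -> E) (a : A) : M := i_inv (phi (s a) - s a).

Definition cocycle_aut (d : A -> M) (x : E) : E := x + i (d (p x)).

Section Automorphism.
Variable phi : E -> E.
Hypothesis phi_aut : Aut phi.

Let phi_linear : linear phi. Proof. by case: phi_aut. Qed.
Let phi_mul x y : phi (mulE x y) = mulE (phi x) (phi y).
Proof. by case: phi_aut => _ [_ []]. Qed.
Let phi_NE x : NE (phi x) = phi (NE x).
Proof. by case: phi_aut => _ [_ [_ []]]. Qed.
Let phi_i u : phi (i u) = i u.
Proof. by case: phi_aut => _ [_ [_ [_ [_ []]]]]. Qed.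
Let phi_s a : p (phi (s a)) = a.
Proof. by case: phi_aut => _ [_ [_ [_ [_ [_ /(_ s s_linear sK)]]]]]. Qed.

#[local] HB.instance Definition _ := GRing.isLinear.Build K E E *:%R phi phi_linear.

Lemma aut_fix_ker x : p x = 0 -> phi x = x.
Proof. by move/i_invK <-; rewrite phi_i. Qed.

Lemma aut_cocycleE a : i (aut_cocycle phi a) = phi (s a) - s a.
Proof. by rewrite i_invK // linearB /= phi_s sK subrr. Qed.

Lemma autE x : phi x = x + i (aut_cocycle phi (p x)).
Proof.
rewrite aut_cocycleE {1}(split_ext x) linearD /= aut_fix_ker ?p_i //.
by rewrite i_invK ?ker_sub_section // addrAC addrA.
Qed.

Lemma p_aut x : p (phi x) = p x.
Proof. by rewrite autE linearD /= p_i addr0. Qed.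

Lemma aut_cocycle_Z1 : Z1 (aut_cocycle phi).
Proof.
split; [|split].
- move=> c a b; apply: i_inj.
  by rewrite linearP /= !aut_cocycleE !linearP /= scalerN scalerBr addrACA.
- move=> a b; apply: i_inj.
  have := phi_mul (s a) (s b); rewrite !autE p_mul !sK.
  rewrite linearDl !linearDr /= mulE_ii linear0 addr0 -actl_s -actr_s.
  by rewrite -!addrA => /addrI ->; rewrite linearD.
- move=> a; apply: i_inj; rewrite -NE_i.
  by have := phi_NE (s a); rewrite !autE p_NE sK linearD /= NE_i => /addrI.
Qed.

End Automorphism.

Lemma aut_cocycleD phi psi : Aut phi -> Aut psi ->
  forall a, aut_cocycle (phi \o psi) a = aut_cocycle phi a + aut_cocycle psi a.
Proof.
move=> phi_aut psi_aut a; rewrite [LHS]/aut_cocycle /= (autE phi_aut).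
rewrite (p_aut psi_aut) (autE psi_aut) sK addrAC [s a + _]addrC addrK.
by rewrite -[i _ + i _]linearD i_inv_i addrC.
Qed.

Lemma aut_cocycle_inj phi psi : Aut phi -> Aut psi ->
  aut_cocycle phi =1 aut_cocycle psi -> phi =1 psi.
Proof.
by move=> phi_aut psi_aut eq_d x; rewrite (autE phi_aut) (autE psi_aut) eq_d.
Qed.

Lemma aut_commute phi psi : Aut phi -> Aut psi -> phi \o psi =1 psi \o phi.
Proof.
move=> phi_aut psi_aut x /=.
rewrite (autE phi_aut (psi x)) (autE psi_aut (phi x)).
rewrite (p_aut phi_aut) (p_aut psi_aut) (autE phi_aut x) (autE psi_aut x).
by rewrite addrAC.
Qed.

Lemma cocycle_autK d : aut_cocycle (cocycle_aut d) =1 d.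
Proof. by move=> a; rewrite /aut_cocycle /cocycle_aut sK addrC addKr i_inv_i. Qed.

Section CocycleAutomorphism.
Variable d : A -> M.
Hypothesis d_Z1 : Z1 d.

Let d_linear : linear d. Proof. by case: d_Z1. Qed.
Let d_mul a b : d (mul a b) = actl a (d b) + actr (d a) b.
Proof. by case: d_Z1 => _ []. Qed.
Let d_N a : NM (d a) = d (N a).
Proof. by case: d_Z1 => _ []. Qed.

#[local] HB.instance Definition _ := GRing.isLinear.Build K A M *:%R d d_linear.

Lemma cocycle_aut_i u : cocycle_aut d (i u) = i u.
Proof. by rewrite /cocycle_aut p_i !linear0 addr0. Qed.

Lemma cocycle_aut_Aut : Aut (cocycle_aut d).
Proof.
rewrite /cocycle_aut; split; [|split; [|split; [|split; [|split; [|split]]]]].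
- by move=> c x y; rewrite !linearP /= scalerDr addrACA.
- exists (fun x => x - i (d (p x))) => x.
    by rewrite linearD /= p_i addr0 addrK.
  by rewrite linearB /= p_i subr0 subrK.
- move=> x y; rewrite p_mul d_mul linearD linearDl !linearDr /=.
  by rewrite mulE_ii linear0 addr0 mulE_actl mulE_actr addrA.
- by move=> x; rewrite linearD /= NE_i d_N p_NE.
- by move=> u; exists u; apply: cocycle_aut_i.
- exact: cocycle_aut_i.
- by move=> t _ tK a; rewrite linearD /= p_i addr0 tK.
Qed.

End CocycleAutomorphism.

End AbelianExtension.

Theorem proposition5p5 (K : fieldType) (charK0 : [pchar K] =i pred0)
  (A M E : lmodType K)
  (mul : A -> A -> A) (N : A -> A)
  (actl : A -> M -> M) (actr : M -> A -> M) (NM : M -> M)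
  (mulE : E -> E -> E) (NE : E -> E) (i : M -> E) (p : E -> A) :
  is_nijenhuis_algebra mul N ->
  is_nijenhuis_bimodule mul N actl actr NM ->
  is_abelian_extension mul N actl actr NM mulE NE i p ->
  (exists Phi : (E -> E) -> (A -> M),
     [/\ (forall phi, in_AutMA mulE NE i p phi -> in_Z1 mul N actl actr NM (Phi phi)),
         (forall phi psi, in_AutMA mulE NE i p phi -> in_AutMA mulE NE i p psi ->
            forall a, Phi (phi \o psi) a = Phi phi a + Phi psi a),
         (forall phi psi, in_AutMA mulE NE i p phi -> in_AutMA mulE NE i p psi ->
            Phi phi =1 Phi psi -> phi =1 psi) &
         (forall d, in_Z1 mul N actl actr NM d ->
            exists phi, in_AutMA mulE NE i p phi /\ Phi phi =1 d)])
  /\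
  (forall phi psi, in_AutMA mulE NE i p phi -> in_AutMA mulE NE i p psi ->
     phi \o psi =1 psi \o phi).
Proof.
move=> _ _ ext.
have [p_linear p_surj] : linear p /\ (forall a, exists x, p x = a).
  by case: ext => _ [_ [? [_ [?]]]].
have [s [s_linear sK]] := linear_section_exists p_linear p_surj.
split; last exact: (aut_commute ext s_linear sK).
exists (aut_cocycle i s); split.
- exact: (aut_cocycle_Z1 ext s_linear sK).
- exact: (aut_cocycleD ext s_linear sK).
- exact: (aut_cocycle_inj ext s_linear sK).
- move=> d d_Z1; exists (cocycle_aut i p d); split.
    exact: (cocycle_aut_Aut ext s_linear sK d_Z1).
  exact: (cocycle_autK ext sK).
Qed.
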